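(* Let $\vec{\mathcal G}=([n],E)$ be a directed graph with $m=|E|$ edges in which every vertex has at least one outgoing edge and which has a single strongly connected component. Let the weights $(r_{ij})_{(i,j)\in E}$ be independent absolutely continuous random variables with densities $f_{ij}$ satisfying $f_{ij}(y)\le\phi$ for all $(i,j)$ and $y$, for some $\phi>0$. Let $\delta=1/(2n^2m\phi)$. Then $$\mathbb P\bigl(\exists \text{ a cycle } C:\ B_1(r,\delta)\subseteq\mathcal P^{C}\bigr)\ge 1-\frac1n,$$ where $B_1(r,\delta)=\{\tilde r\in\mathbb R^m:\|r-\tilde r\|_1\le\delta\}$.
   Context: The mean weight of a directed cycle is the sum of its edge weights divided by its number of edges. For a directed cycle $C$, $\mathcal P^{C}$ is the set of $r\in\mathbb R^m$ such that $C$ is the unique cycle of minimum mean weight in $\vec{\mathcal G}$ with weights $r$. *)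

From HB Require Import structures.
From mathcomp Require Import all_boot all_order all_algebra.
From mathcomp Require Import all_classical all_reals all_analysis.
Set Implicit Arguments. Unset Strict Implicit. Unset Printing Implicit Defensive.
Import Order.TTheory GRing.Theory Num.Theory.
Local Open Scope ring_scope.
Local Open Scope classical_set_scope.

(* Weight vectors r in R^m (m = #|E|)
   are encoded as functions 'I_n * 'I_n -> R, only values on E matter. *)

(* edge set of the closed walk s_0 -> s_1 -> ... -> s_{k-1} -> s_0 *)
Definition cycle_edges (n : nat) (s : seq 'I_n) : {set 'I_n * 'I_n} :=
  [set e in zip s (rot 1 s)].

Definition is_dcycle (n : nat) (E C : {set 'I_n * 'I_n}) : Prop :=
  exists s : seq 'I_n, [/\ s != [::], uniq s, C = cycle_edges s & C \subset E].

Definition mean_weight (R : realType) (n : nat) (w : 'I_n * 'I_n -> R)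
  (C : {set 'I_n * 'I_n}) : R :=
  (\sum_(e in C) w e) / (#|C|%:R).

Definition PC (R : realType) (n : nat) (E C : {set 'I_n * 'I_n})
  : set ('I_n * 'I_n -> R) :=
  [set w | is_dcycle E C /\
     forall C', is_dcycle E C' -> C' <> C -> mean_weight w C < mean_weight w C'].

Definition l1ball (R : realType) (n : nat) (E : {set 'I_n * 'I_n})
  (r : 'I_n * 'I_n -> R) (delta : R) : set ('I_n * 'I_n -> R) :=
  [set r' | \sum_(e in E) `|r e - r' e| <= delta].

Definition mutually_independent (R : realType) (d : measure_display)
  (T : measurableType d) (P : probability T R) (n : nat)
  (E : {set 'I_n * 'I_n}) (X : 'I_n * 'I_n -> {RV P >-> R}) : Prop :=
  forall (S : {set 'I_n * 'I_n}) (A : 'I_n * 'I_n -> set R),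
    S \subset E -> (forall e, e \in S -> measurable (A e)) ->
    P [set t | forall e, e \in S -> A e (X e t)] =
    (\prod_(e in S) P (X e @^-1` A e))%E.

Definition is_density (R : realType) (d : measure_display)
  (T : measurableType d) (P : probability T R) (Y : {RV P >-> R})
  (f : R -> R) : Prop :=
  measurable_fun setT f /\ (forall y, 0 <= f y) /\
  forall A : set R, measurable A ->
    P (Y @^-1` A) = (\int[@lebesgue_measure R]_(y in A) (f y)%:E)%E.

Definition strongly_connected (n : nat) (E : {set 'I_n * 'I_n}) : Prop :=
  forall i j : 'I_n, connect (fun x y => (x, y) \in E) i j.

From HB Require Import structures.
From mathcomp Require Import all_boot all_order all_algebra.
From mathcomp Require Import all_classical all_reals all_analysis.
From mathcomp Require Import lra ring.
Import Order.TTheory GRing.Theory Num.Theory.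
Local Open Scope ring_scope.
Local Open Scope classical_set_scope.
Set Implicit Arguments. Unset Strict Implicit. Unset Printing Implicit Defensive.

(* Call an edge [e] [eps]-ambiguous for the weights [w] when the least mean
   weight of a cycle through [e] and the least mean weight of a cycle avoiding
   [e] differ by at most [eps].  If no edge is [delta]-ambiguous, the
   minimum-mean cycle beats every other cycle by more than [delta]; as mean
   weights are linear in the weights with coefficients in [0, 1], it then stays
   the unique minimiser on the whole l1 ball of radius [delta].
   Changing only the weight of [e] by [x] shifts the mean of every cycle through
   [e] by at least [x / n] and leaves the other cycles alone, so for fixed other
   weights the values of [r_e] making [e] ambiguous lie in an interval of length
   [2 n delta], of probability at most [2 n phi delta].  Independence makes this
   rigorous on each cell of a fine grid in the other weights, and a union bound
   over the [m] edges gives failure probability at most [2 n m phi delta = 1/n]. *)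

Lemma exists_argmin (R : realType) (I : finType) (A : I -> Prop) (F : I -> R) :
  (exists i, A i) -> exists i, A i /\ forall j, A j -> F i <= F j.
Proof.
case=> i0 Ai0; have Pi0 : [pred i | `[< A i >]] i0 by rewrite /= asboolE.
case: (arg_minP F Pi0) => i /asboolP Ai Hi; exists i; split => // j Aj.
by apply: Hi; rewrite /= asboolE.
Qed.

Section MeanWeight.
Variables (R : realType) (n : nat) (E : {set 'I_n * 'I_n}).
Implicit Types (C : {set 'I_n * 'I_n}) (w : 'I_n * 'I_n -> R).

Lemma dcycle_sub C : is_dcycle E C -> C \subset E.
Proof. by case=> s []. Qed.

Lemma dcycle_card C : is_dcycle E C -> (0 < #|C| <= n)%N.
Proof.
case=> [[|x s] [// _ us -> _]]; apply/andP; split.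
  apply/card_gt0P; exists (x, head x (rcons s x)).
  by rewrite /cycle_edges inE rot1_cons; case: s {us} => [|y s] //=; rewrite inE eqxx.
rewrite /cycle_edges cardsE; apply: leq_trans (card_size _) _.
rewrite size_zip size_rot minnn -(card_uniqP us).
by rewrite -[leqRHS](card_ord n) max_card.
Qed.

Lemma path_zip_rcons (T : eqType) (r : rel T) x y p : path r x (rcons p y) ->
  all (fun q => r q.1 q.2) (zip (x :: p) (rcons p y)).
Proof. by elim: p x => [|z p IH] x /=; [rewrite andbT|move=> /andP[-> /IH]]. Qed.

Lemma exists_dcycle : (exists i j, (i, j) \in E) -> strongly_connected E ->
  exists C, is_dcycle E C.
Proof.
move=> [i [j ijE]] sc; have /connectP [p pth ilast] := sc j i.
case: (shortenP pth) ilast => p' pth' uq _ ilast.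
exists (cycle_edges (j :: p')), (j :: p'); split => //.
have : path (fun x y => (x, y) \in E) j (rcons p' j).
  by rewrite rcons_path pth' -ilast ijE.
move/path_zip_rcons/allP => zipE; apply/fintype.subsetP => -[x y].
by rewrite /cycle_edges inE rot1_cons => /zipE.
Qed.

Definition update w e (x : R) := fun g => if g == e then x else w g.

Lemma update_id w e : update w e (w e) = w.
Proof. by apply/funext => g; rewrite /update; case: eqP => // ->. Qed.

Lemma mean_weight_update w e x1 x2 C :
  mean_weight (update w e x2) C - mean_weight (update w e x1) C =
  if e \in C then (x2 - x1) / #|C|%:R else 0.
Proof.
rewrite /mean_weight -mulrBl -sumrB; case: ifP => eC.
  rewrite (bigD1 e) //= /update eqxx big1 ?addr0 // => g /andP[_ ge].
  by rewrite (negbTE ge) subrr.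
rewrite big1 ?mul0r // => g gC; rewrite /update; case: eqP => [ge|_].
  by move: gC; rewrite ge eC.
by rewrite subrr.
Qed.

Lemma dist_mean_weight_le w w' h C : is_dcycle E C ->
  (forall g, g \in E -> `|w g - w' g| <= h) ->
  `|mean_weight w C - mean_weight w' C| <= h.
Proof.
move=> cC hw; have /andP[C0 _] := dcycle_card cC.
have Cpos : 0 < #|C|%:R :> R by rewrite ltr0n.
rewrite /mean_weight -mulrBl -sumrB normrM normfV (gtr0_norm Cpos) ler_pdivrMr //.
apply: le_trans (ler_norm_sum _ _ _) _.
rewrite -sumr_const mulr_sumr; apply: ler_sum => g gC; rewrite mulr1.
exact/hw/(fintype.subsetP (dcycle_sub cC)).
Qed.

Definition mean_coef C g : R := (g \in C)%:R / #|C|%:R.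

Lemma mean_coef_itv C g : 0 <= mean_coef C g <= 1.
Proof.
rewrite /mean_coef; case: (g \in C); last by rewrite mul0r lexx ler01.
rewrite mul1r invr_ge0 ler0n /=; have [->|C0] := posnP #|C|; first by rewrite invr0 ler01.
by rewrite invf_le1 ?ler1n ?ltr0n.
Qed.

Lemma mean_weight_coef w C : is_dcycle E C ->
  mean_weight w C = \sum_(g in E) w g * mean_coef C g.
Proof.
move=> cC; rewrite /mean_weight /mean_coef mulr_suml.
rewrite [RHS](bigID (mem C)) /= [X in _ = _ + X]big1 ?addr0; last first.
  by move=> g /andP[_ /negbTE ->]; rewrite mul0r mulr0.
apply: eq_big => [g|g gC]; last by rewrite gC mul1r.
by case gC: (g \in C); rewrite ?andbF ?andbT // (fintype.subsetP (dcycle_sub cC)).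
Qed.

End MeanWeight.

Arguments mean_coef {R n} C g.
Arguments mean_coef_itv {R n} C g.

Section Ambiguity.
Variables (R : realType) (n : nat) (E : {set 'I_n * 'I_n}).
Implicit Types (C : {set 'I_n * 'I_n}) (w : 'I_n * 'I_n -> R).

Definition ambiguous (eps : R) e w : Prop :=
  (exists C, [/\ is_dcycle E C, e \in C & forall C', is_dcycle E C' -> e \notin C' ->
      mean_weight w C <= mean_weight w C' + eps]) /\
  (exists C', [/\ is_dcycle E C', e \notin C' & forall C, is_dcycle E C -> e \in C ->
      mean_weight w C' <= mean_weight w C + eps]).

Lemma ambiguous_perturb eps h e w w' : (forall g, g \in E -> `|w g - w' g| <= h) ->
  ambiguous eps e w -> ambiguous (eps + h + h) e w'.
Proof.
move=> hw; have near C : is_dcycle E C ->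
    mean_weight w' C <= mean_weight w C + h /\ mean_weight w C <= mean_weight w' C + h.
  by move=> cC; have := dist_mean_weight_le cC hw; rewrite ler_norml => /andP[? ?]; lra.
case=> [[C [cC eC minC]] [C' [cC' eC' minC']]]; split.
  exists C; split => // D cD eD; have := minC D cD eD.
  by have := near C cC; have := near D cD; lra.
exists C'; split => // D cD eD; have := minC' D cD eD.
by have := near C' cC'; have := near D cD; lra.
Qed.

Lemma ambiguous_update_le eps e w x1 x2 : x1 <= x2 ->
  ambiguous eps e (update w e x1) -> ambiguous eps e (update w e x2) ->
  x2 - x1 <= 2 * n%:R * eps.
Proof.
move=> x12 [_ [C' [cC' eC' minC']]] [[C [cC eC minC]] _].
have /andP[C0 Cn] := dcycle_card cC.
have Cpos : 0 < #|C|%:R :> R by rewrite ltr0n.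
have Cle : #|C|%:R <= n%:R :> R by rewrite ler_nat.
have := minC C' cC' eC'; have := minC' C cC eC.
have := mean_weight_update w e x1 x2 C'; rewrite (negbTE eC').
have := mean_weight_update w e x1 x2 C; rewrite eC.
set q := (x2 - x1) / _ => dC dC' minC'C minCC'.
have q_le : q <= 2 * eps by lra.
have q0 : 0 <= q by rewrite divr_ge0 ?subr_ge0 // ltW.
have -> : x2 - x1 = q * #|C|%:R by rewrite divfK // gt_eqF.
apply: le_trans (ler_wpM2l q0 Cle) _.
by rewrite mulrC (mulrC 2) -mulrA ler_wpM2l ?ler0n.
Qed.

Lemma ambiguous_update_itv eps e w :
  let J := [set x | ambiguous eps e (update w e x)] in
  J `<=` `[inf J, inf J + 2 * n%:R * eps].
Proof.
move=> J x Jx; have eps0 : 0 <= 2 * n%:R * eps.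
  by have := ambiguous_update_le (lexx x) Jx Jx; rewrite subrr.
have lbJ : lbound J (x - 2 * n%:R * eps).
  move=> y Jy; case: (leP x y) => xy; first lra.
  by have := ambiguous_update_le (ltW xy) Jy Jx; lra.
have infJ_le : inf J <= x by apply: ge_inf Jx; exists (x - 2 * n%:R * eps).
have le_infJ : x - 2 * n%:R * eps <= inf J by apply: lb_le_inf lbJ; exists x.
by rewrite /= in_itv /=; apply/andP; split; lra.
Qed.

(* An edge in the symmetric difference of the minimum-mean cycle and a cycle
   within [eps] of it is ambiguous. *)
Lemma unambiguous_gap eps w : 0 <= eps -> (exists C, is_dcycle E C) ->
  (forall e, e \in E -> ~ ambiguous eps e w) ->
  exists C, is_dcycle E C /\ forall C', is_dcycle E C' -> C' <> C ->
    mean_weight w C + eps < mean_weight w C'.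
Proof.
move=> eps0 exC unamb; have [C [cC minC]] := exists_argmin (mean_weight w) exC.
exists C; split => // C' cC' C'C; rewrite ltNge; apply/negP => C'_near.
have : C != C' by apply/eqP => CC'; apply: C'C.
rewrite finset.eqEsubset negb_and => /orP[] /fintype.subsetPn [e e1 e2].
- apply: (unamb e (fintype.subsetP (dcycle_sub cC) e e1)); split.
    by exists C; split => // D cD _; have := minC D cD; lra.
  by exists C'; split => // D cD _; have := minC D cD; lra.
- apply: (unamb e (fintype.subsetP (dcycle_sub cC') e e1)); split.
    by exists C'; split => // D cD _; have := minC D cD; lra.
  by exists C; split => // D cD _; have := minC D cD; lra.
Qed.

End Ambiguity.

Section Robustness.
Variables (R : realType) (n : nat) (E : {set 'I_n * 'I_n}).
Implicit Types (C : {set 'I_n * 'I_n}) (w : 'I_n * 'I_n -> R).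

(* Mean weights are linear in the weights, and the extreme points of the l1
   ball of radius [del] around [w] are the [w +- del 1_g]; so this says exactly
   that the whole ball lies in [PC E C]. *)
Definition robust_min (del : R) w : Prop :=
  exists C, is_dcycle E C /\ forall C', is_dcycle E C' -> C' <> C ->
    forall g, g \in E -> del * `|mean_coef C' g - mean_coef C g| <
       mean_weight w C' - mean_weight w C.

Lemma ball_sub_PC_robust (del : R) w : 0 <= del ->
  (exists C, l1ball E w del `<=` PC E C) -> robust_min del w.
Proof.
move=> del0 [C ballC].
have [cC _] : PC E C w.
  by apply: ballC; rewrite /l1ball /= big1 // => g _; rewrite subrr normr0.
exists C; split => // C' cC' C'C g gE.
(* Move [w] by [del] along [g], in the direction that lowers the gap. *)
pose s := if (0 : R) <= mean_coef C' g - mean_coef C g then - del else del.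
have [_ minC] : PC E C (update w g (w g + s)).
  apply: ballC; rewrite /l1ball /= (bigD1 g) //= big1 ?addr0 /update ?eqxx.
    by rewrite opprD addrA subrr sub0r normrN /s; case: ifP; rewrite ?normrN ger0_norm.
  by move=> g' /andP[_ /negbTE ->]; rewrite subrr normr0.
have shift D : mean_weight (update w g (w g + s)) D - mean_weight w D = s * mean_coef D g.
  rewrite -[in X in _ - X](update_id w g) mean_weight_update /mean_coef.
  by case: (g \in D); rewrite ?mul1r ?mul0r ?mulr0 // addrAC subrr add0r.
have shift_gap : s * mean_coef C' g - s * mean_coef C g =
    - (del * `|mean_coef C' g - mean_coef C g|).
  rewrite -mulrBr /s; case: ifP => hc; first by rewrite ger0_norm // mulNr.
  by rewrite ltr0_norm ?ltNge ?hc // mulrN opprK.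
by have := minC C' cC' C'C; have := shift C; have := shift C'; lra.
Qed.

Lemma robust_ball_sub_PC (del : R) w : robust_min del w ->
  exists C, l1ball E w del `<=` PC E C.
Proof.
move=> [C [cC gapC]]; exists C => w' ball_w'; split => // C' cC' C'C.
pose c g : R := mean_coef C' g - mean_coef C g.
have gap : mean_weight w' C' - mean_weight w' C =
    mean_weight w C' - mean_weight w C + \sum_(g in E) (w' g - w g) * c g.
  rewrite !(mean_weight_coef _ cC) !(mean_weight_coef _ cC') -!sumrB -big_split.
  by apply: eq_bigr => g _; rewrite /c /=; ring.
have [g0 g0C'] : exists g0, g0 \in C'.
  by have /andP[/card_gt0P [g0 ?] _] := dcycle_card cC'; exists g0.
have [g [gE gmax]] : exists g, g \in E /\ forall g', g' \in E -> - `|c g| <= - `|c g'|.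
  by apply: exists_argmin; exists g0; apply: (fintype.subsetP (dcycle_sub cC')).
have perturb : `|\sum_(g in E) (w' g - w g) * c g| <= `|c g| * del.
  apply: le_trans (ler_norm_sum _ _ _) _.
  apply: le_trans (_ : \sum_(g' in E) `|c g| * `|w g' - w' g'| <= _).
    apply: ler_sum => g' g'E; rewrite normrM distrC mulrC ler_wpM2r //.
    by have := gmax g' g'E; rewrite lerN2.
  by rewrite -mulr_sumr ler_wpM2l.
have := gapC C' cC' C'C g gE; move: perturb; rewrite ler_norml => /andP[p1 p2] gapg.
by rewrite -subr_gt0 gap; rewrite /c in p1 p2; lra.
Qed.

Lemma unambiguous_robust (del : R) w : 0 <= del -> (exists C, is_dcycle E C) ->
  (forall e, e \in E -> ~ ambiguous E del e w) -> robust_min del w.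
Proof.
move=> del0 exC unamb; have [C [cC gapC]] := unambiguous_gap del0 exC unamb.
exists C; split => // C' cC' C'C g gE; have := gapC C' cC' C'C.
have /andP[a0 a1] := mean_coef_itv (R := R) C g.
have /andP[b0 b1] := mean_coef_itv (R := R) C' g.
have : `|mean_coef C' g - mean_coef C g| <= 1 :> R by rewrite ler_norml; apply/andP; split; lra.
by move=> /(ler_wpM2l del0); rewrite mulr1; lra.
Qed.

End Robustness.

Section Measurability.
Variables (R : realType) (d : measure_display) (T : measurableType d).
Implicit Types (f g : T -> R).

Lemma measurable_ler_set f g : measurable_fun setT f -> measurable_fun setT g ->
  measurable [set t | f t <= g t].
Proof. by move=> mf mg; rewrite -[X in measurable X]setTI; exact: measurable_fun_le. Qed.

Lemma measurable_ltr_set f g : measurable_fun setT f -> measurable_fun setT g ->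
  measurable [set t | f t < g t].
Proof.
move=> mf mg; have -> : [set t | f t < g t] = ~` [set t | g t <= f t].
  by apply/seteqP; split => t /=; rewrite ltNge => /negP.
by apply: measurableC; exact: measurable_ler_set.
Qed.

Variables (n : nat) (E : {set 'I_n * 'I_n}) (X : 'I_n * 'I_n -> T -> R).
Hypothesis mX : forall e, measurable_fun setT (X e).

Lemma measurable_mean_weight C : measurable_fun setT (fun t => mean_weight (X ^~ t) C).
Proof.
rewrite /mean_weight; under eq_fun do rewrite -big_enum.
by apply: measurable_realfun.measurable_funM; [exact: measurable_sum|exact: measurable_cst].
Qed.

Lemma measurable_robust_min (del : R) :
  measurable [set t | robust_min E del (X ^~ t)].
Proof.
have -> : [set t | robust_min E del (X ^~ t)] =
  \bigcup_(C in [set C | is_dcycle E C])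
   \bigcap_(C' in [set C' | is_dcycle E C' /\ C' <> C])
    \bigcap_(g in [set g | g \in E])
     [set t | del * `|mean_coef C' g - mean_coef C g| <
        mean_weight (X ^~ t) C' - mean_weight (X ^~ t) C].
  apply/seteqP; split => t /=.
    by move=> [C [cC gapC]]; exists C => // C' [cC' C'C] g gE; apply: gapC.
  by move=> [C cC gapC]; exists C; split => // C' cC' C'C g gE; apply: (gapC C').
apply: fin_bigcup_measurable => [|C _]; first exact: finite_finset.
apply: fin_bigcap_measurable => [|C' _]; first exact: finite_finset.
apply: fin_bigcap_measurable => [|g _]; first exact: finite_finset.
apply: measurable_ltr_set; first exact: measurable_cst.
by apply: measurable_realfun.measurable_funB; exact: measurable_mean_weight.
Qed.

Lemma measurable_ambiguous (eps : R) e :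
  measurable [set t | ambiguous E eps e (X ^~ t)].
Proof.
pose near_min (through : bool) :=
  \bigcup_(C in [set C | is_dcycle E C /\ (e \in C) = through])
   \bigcap_(C' in [set C' | is_dcycle E C' /\ (e \in C') = ~~ through])
     [set t | mean_weight (X ^~ t) C <= mean_weight (X ^~ t) C' + eps].
have -> : [set t | ambiguous E eps e (X ^~ t)] = near_min true `&` near_min false.
  apply/seteqP; split => t /=.
    move=> [[C [cC eC minC]] [C' [cC' eC' minC']]]; split.
      by exists C => // D [cD /negbT eD]; exact: minC.
    by exists C' => //=; [split => //; exact/negbTE|move=> D [cD eD]; exact: minC'].
  move=> [[C [cC eC] minC] [C' [cC' /negbT eC'] minC']]; split.
    by exists C; split => // D cD eD; apply: minC; split => //; exact/negbTE.
  by exists C'; split => // D cD eD; exact: minC'.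
have near_min_measurable b : measurable (near_min b).
  apply: fin_bigcup_measurable => [|C _]; first exact: finite_finset.
  apply: fin_bigcap_measurable => [|C' _]; first exact: finite_finset.
  apply: measurable_ler_set; first exact: measurable_mean_weight.
  apply: measurable_realfun.measurable_funD; first exact: measurable_mean_weight.
  exact: measurable_cst.
exact: measurableI.
Qed.

End Measurability.

Lemma prob_le_partition (R : realType) (d : measure_display) (T : measurableType d)
    (P : probability T R) (A : set T) (F : nat -> set T) (c : R) :
  measurable A -> (forall i, measurable (F i)) -> trivIset setT F ->
  \bigcup_i F i = setT -> 0 <= c ->
  (forall i, P (A `&` F i) <= c%:E * P (F i))%E -> (P A <= c%:E)%E.
Proof.
move=> mA mF trivF coverF c0 bound.
rewrite -(setIT A) -coverF setI_bigcupr measure_bigcup //; last first.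
- exact: trivIset_setIl.
- by move=> i _; exact: measurableI.
apply: (@le_trans _ _ (\sum_(i <oo | i \in setT) (c%:E * P (F i)))%E).
  by apply: lee_nneseries => [i _ _|i _]; [exact: measure_ge0|exact: bound].
rewrite nneseriesZl; last by move=> i _; exact: measure_ge0.
rewrite -measure_bigcup // coverF -[leRHS]mule1.
by apply: lee_wpmul2l; [rewrite lee_fin|exact: probability_le1].
Qed.

Section Probability.
Variables (R : realType) (d : measure_display) (T : measurableType d)
  (P : probability T R) (n : nat) (E : {set 'I_n * 'I_n})
  (X : 'I_n * 'I_n -> {RV P >-> R}) (f : 'I_n * 'I_n -> R -> R) (phi : R).
Hypothesis density : forall e, e \in E -> is_density (X e) (f e).
Hypothesis density_le : forall e, e \in E -> forall y, f e y <= phi.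
Hypothesis indep : mutually_independent E X.

Lemma prob_itv_le e (a w : R) : e \in E -> 0 <= w ->
  (P (X e @^-1` `[a, (a + w)%R]) <= (phi * w)%:E)%E.
Proof.
move=> eE w0; have [mf [f0 densityE]] := density eE.
rewrite densityE; last exact: measurable_itv.
apply: (@le_trans _ _ (\int[lebesgue_measure]_(y in `[a, (a + w)%R]) (cst phi%:E y))%E).
  apply: ge0_le_integral => //.
  - by move=> y _; rewrite lee_fin.
  - by apply/measurable_realfun.measurable_EFinP; exact: measurable_funS mf.
  - by move=> y _; rewrite lee_fin density_le.
rewrite integral_cst //; have := lebesgue_measure_itv `[a, a + w]%R; rewrite /= => ->.
case: ifP => _; first by rewrite -EFinD -EFinM addrAC subrr add0r.
by rewrite mule0 lee_fin mulr_ge0 // (le_trans (f0 a)) ?density_le.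
Qed.

Section Grid.
Variables (e : 'I_n * 'I_n) (h : R).
Hypotheses (eE : e \in E) (h_gt0 : 0 < h).
Implicit Types k : {ffun 'I_n * 'I_n -> int}.

(* Cells of the grid of mesh [h] in the coordinates of [E :\ e]; the
   coordinates outside [E :\ e] are pinned to [0] so that distinct [k] give
   disjoint cells. *)
Definition grid_itv k g : set R :=
  `[(k g)%:~R * h, (k g + 1)%:~R * h[.

Definition grid_box k : set T :=
  [set t | (forall g, g \notin E :\ e -> k g = 0) /\
     forall g, g \in E :\ e -> grid_itv k g (X g t)].

Lemma grid_box_nil k : ~ (forall g, g \notin E :\ e -> k g = 0) -> grid_box k = set0.
Proof. by move=> k0; apply/seteqP; split => t // []. Qed.

Lemma measurable_grid_box k : measurable (grid_box k).
Proof.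
have [k0|k0] := pselect (forall g, g \notin E :\ e -> k g = 0); last by rewrite grid_box_nil.
have -> : grid_box k = \bigcap_(g in [set g | g \in E :\ e]) (X g @^-1` grid_itv k g).
  by apply/seteqP; split => t /=; [case=> _ boxt g /boxt|split].
apply: fin_bigcap_measurable => [|g _]; first exact: finite_finset.
by apply: measurable_funPTI; exact: measurable_itv.
Qed.

Lemma prob_grid_boxI k (I : set R) : measurable I ->
  P (grid_box k `&` X e @^-1` I) = (P (grid_box k) * P (X e @^-1` I))%E.
Proof.
move=> mI; have [k0|k0] := pselect (forall g, g \notin E :\ e -> k g = 0); last first.
  by rewrite grid_box_nil // set0I measure0 mul0e.
pose A g := if g == e then I else grid_itv k g.
have mA g : g \in E -> measurable (A g).
  by move=> _; rewrite /A; case: eqP => _ //; exact: measurable_itv.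
have A_other g : g \in E :\ e -> A g = grid_itv k g.
  by rewrite !inE /A => /andP[/negbTE ->].
have grid_boxIE : grid_box k `&` X e @^-1` I = [set t | forall g, g \in E -> A g (X g t)].
  apply/seteqP; split => t /=.
    move=> [[_ boxt] Iet] g gE; have [->|ge] := eqVneq g e; first by rewrite /A eqxx.
    by rewrite A_other ?inE ?ge //; apply: boxt; rewrite !inE ge.
  move=> At; split; last by have := At e eE; rewrite /A eqxx.
  split => // g gEe; rewrite -A_other //; apply: At.
  by move: gEe; rewrite !inE => /andP[].
have grid_boxE : grid_box k = [set t | forall g, g \in E :\ e -> A g (X g t)].
  apply/seteqP; split => t /=.
    by move=> [_ boxt] g gEe; rewrite A_other //; exact: boxt.
  by move=> At; split => // g gEe; rewrite -A_other //; exact: At.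
have Ee_sub : E :\ e \subset E by exact: subD1set.
rewrite grid_boxIE grid_boxE (indep (subxx _) mA).
rewrite (indep Ee_sub (fun g gEe => mA g (fintype.subsetP Ee_sub g gEe))).
rewrite (bigD1 e) //= muleC /A eqxx; congr (_ * _)%E.
by apply: eq_bigl => g; rewrite !inE andbC.
Qed.

Lemma grid_box_floor k t g : grid_box k t -> g \in E :\ e -> k g = Num.floor (X g t / h).
Proof.
move=> [_ boxt] gEe; apply/esym/eqP; rewrite floor_eq.
by have := boxt g gEe; rewrite /grid_itv /= in_itv /= -!ler_pdivlMr // -!ltr_pdivrMr.
Qed.

Definition grid_cell (i : nat) : set T :=
  if pickle_inv i is Some k then grid_box k else set0.

Lemma measurable_grid_cell i : measurable (grid_cell i).
Proof.
by rewrite /grid_cell; case: pickle_inv => [k|]; [exact: measurable_grid_box|exact: measurable0].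
Qed.

Lemma trivIset_grid_cell : trivIset setT grid_cell.
Proof.
move=> i j _ _ [t []]; rewrite /grid_cell.
case ei: (pickle_inv i) => [k|] //; case ej: (pickle_inv j) => [k'|] // boxk boxk'.
have kk' : k = k'.
  apply/ffunP => g; case gEe : (g \in E :\ e).
    by rewrite (grid_box_floor boxk) ?(grid_box_floor boxk').
  by case: boxk boxk' => [k0 _] [k0' _]; rewrite k0 ?k0' ?gEe.
have := @pickle_invK {ffun 'I_n * 'I_n -> int} i.
by have := @pickle_invK {ffun 'I_n * 'I_n -> int} j; rewrite ei ej kk' /= => -> ->.
Qed.

Lemma bigcup_grid_cell : \bigcup_i grid_cell i = setT.
Proof.
apply/seteqP; split => // t _.
pose k := [ffun g => if g \in E :\ e then Num.floor (X g t / h) else 0].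
exists (pickle k) => //; rewrite /grid_cell pickleK_inv; split.
  by move=> g /negbTE gEe; rewrite ffunE gEe.
move=> g gEe; rewrite /grid_itv ffunE gEe /= in_itv /=.
by rewrite -ler_pdivlMr // -ltr_pdivrMr // floor_itv.
Qed.

Variable del : R.

Definition grid_corner k g : R := (k g)%:~R * h.

Definition ambiguous_values k : set R :=
  [set x | ambiguous E (del + h + h) e (update (grid_corner k) e x)].

(* Inside a cell, the weights of [E :\ e] are within [h] of the corner of the
   cell, so ambiguity of [e] confines [X e] to an interval fixed by the cell. *)
Lemma ambiguous_grid_box_sub k :
  let a := inf (ambiguous_values k) in
  [set t | ambiguous E del e (X ^~ t)] `&` grid_box k `<=`
    grid_box k `&` X e @^-1` `[a, a + 2 * n%:R * (del + h + h)].
Proof.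
move=> a t [amb_t boxt]; split => //; apply: ambiguous_update_itv => /=.
apply: ambiguous_perturb amb_t => g gE; rewrite /update; case: eqP => [->|/eqP ge].
  by rewrite subrr normr0 ltW.
have gEe : g \in E :\ e by rewrite !inE ge.
case: boxt => _ /(_ g gEe); rewrite /grid_itv /grid_corner /= in_itv /= => /andP[lo up].
by rewrite ler_norml; apply/andP; split; rewrite ?intrD mulrDl mul1r in up; lra.
Qed.

Lemma prob_ambiguous_le_grid : 0 <= del ->
  (P [set t | ambiguous E del e (X ^~ t)] <= (phi * (2 * n%:R * (del + h + h)))%:E)%E.
Proof.
move=> del0; have phi0 : 0 <= phi.
  by apply: le_trans (density_le eE 0); have [_ [f0 _]] := density eE.
have dh0 : 0 <= del + h + h by rewrite -addrA addr_ge0 // addr_ge0 // ltW.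
have c0 : 0 <= phi * (2 * n%:R * (del + h + h)).
  by rewrite mulr_ge0 // mulr_ge0 // mulr_ge0 ?ler0n.
have mX g : measurable_fun setT (X g) := measurable_funPT (X g).
apply: (prob_le_partition (measurable_ambiguous E mX del e) measurable_grid_cell
  trivIset_grid_cell bigcup_grid_cell c0) => i.
rewrite /grid_cell; case: pickle_inv => [k|]; last by rewrite setI0 measure0 mule0.
set a := inf (ambiguous_values k).
set I := `[a, a + 2 * n%:R * (del + h + h)]%classic.
apply: (@le_trans _ _ (P (grid_box k `&` X e @^-1` I))).
  apply: le_measure; last exact: ambiguous_grid_box_sub.
  - by rewrite inE; apply: measurableI; [exact: measurable_ambiguous|exact: measurable_grid_box].
  - rewrite inE; apply: measurableI; first exact: measurable_grid_box.
    by apply: measurable_funPTI; exact: measurable_itv.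
rewrite prob_grid_boxI; last exact: measurable_itv.
rewrite muleC; apply: lee_wpmul2r; first exact: measure_ge0.
by apply: prob_itv_le; rewrite // mulr_ge0 // mulr_ge0 ?ler0n.
Qed.

End Grid.

(* Letting the mesh [h] of the grid go to [0]. *)
Lemma prob_ambiguous_le e (del : R) : e \in E -> 0 <= del -> (0 < n)%N -> 0 < phi ->
  (P [set t | ambiguous E del e (X ^~ t)] <= (phi * (2 * n%:R * del))%:E)%E.
Proof.
move=> eE del0 n0 phi0; set A := [set t | _].
have mA : measurable A by apply: measurable_ambiguous => g; exact: measurable_funPT.
have PA_fin : P A \is a fin_num := fin_num_measure P A mA.
rewrite -(fineK PA_fin) lee_fin; apply/ler_addgt0Pr => eps eps0.
have n_gt0 : 0 < n%:R :> R by rewrite ltr0n.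
pose h := eps / (4 * n%:R * phi).
have h_gt0 : 0 < h by rewrite divr_gt0 // !mulr_gt0.
have := prob_ambiguous_le_grid eE h_gt0 del0; rewrite -/A -(fineK PA_fin) lee_fin.
suff -> : phi * (2 * n%:R * (del + h + h)) = phi * (2 * n%:R * del) + eps by [].
by rewrite /h; field; rewrite ?gt_eqF.
Qed.

Lemma prob_not_robust_le (del : R) : 0 <= del -> (0 < n)%N -> 0 < phi ->
  (exists C, is_dcycle E C) ->
  (P (~` [set t | robust_min E del (X ^~ t)]) <=
    (#|E|%:R * (phi * (2 * n%:R * del)))%:E)%E.
Proof.
move=> del0 n_gt0 phi_gt0 exC.
have mX g : measurable_fun setT (X g) := measurable_funPT (X g).
pose A e := [set t | ambiguous E del e (X ^~ t)].
have not_robust_sub :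
    ~` [set t | robust_min E del (X ^~ t)] `<=` \bigcup_(e in [set` enum E]) A e.
  move=> t /= not_robust; apply: contrapT => not_amb.
  apply/not_robust/(unambiguous_robust del0 exC) => e eE amb_e.
  by apply: not_amb; exists e; rewrite //= mem_enum.
apply: le_trans (content_sub_fsum P (finite_seq _) (fun e _ => measurable_ambiguous E mX del e)
  (measurableC (measurable_robust_min E mX del)) not_robust_sub) _.
rewrite -fsbig_seq ?enum_uniq // big_enum /=.
apply: (@le_trans _ _ (\sum_(e in E) (phi * (2 * n%:R * del))%:E)%E).
  by apply: lee_sum => e eE; exact: (prob_ambiguous_le eE del0 n_gt0 phi_gt0).
by rewrite sumEFin sumr_const (mulr_natl _ #|E|).
Qed.

End Probability.

Theorem mainTheorem4 (R : realType) (d : measure_display) (T : measurableType d)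
  (P : probability T R) (n : nat) (E : {set 'I_n * 'I_n})
  (X : 'I_n * 'I_n -> {RV P >-> R}) (f : 'I_n * 'I_n -> R -> R) (phi : R) :
  (0 < n)%N ->
  (forall i : 'I_n, exists j : 'I_n, (i, j) \in E) ->
  strongly_connected E ->
  mutually_independent E X ->
  (forall e, e \in E -> is_density (X e) (f e)) ->
  0 < phi ->
  (forall e, e \in E -> forall y, f e y <= phi) ->
  let delta := ((2 * n ^ 2 * #|E|)%:R * phi)^-1 in
  ((1 - n%:R^-1)%:E <=
   P [set t | exists C : {set 'I_n * 'I_n},
        l1ball E (fun e => X e t) delta `<=` @PC R n E C])%E.
Proof.
move=> n_gt0 out_edge sc indep density phi_gt0 density_le /=.
set delta := (_ * phi)^-1.
have [j e0E] := out_edge (Ordinal n_gt0).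
have E_gt0 : (0 < #|E|)%N by apply/card_gt0P; exists (Ordinal n_gt0, j).
have delta_gt0 : 0 < delta by rewrite invr_gt0 mulr_gt0 // ltr0n !muln_gt0 n_gt0 E_gt0.
have exC : exists C, is_dcycle E C by apply: exists_dcycle => //; exists (Ordinal n_gt0), j.
set S := [set t | _].
have SE : S = [set t | robust_min E delta (X ^~ t)].
  apply/seteqP; split => t /=; first exact: ball_sub_PC_robust (ltW delta_gt0).
  exact: robust_ball_sub_PC.
have mS : measurable S.
  by rewrite SE; apply: measurable_robust_min => g; exact: measurable_funPT.
have := prob_not_robust_le density density_le indep (ltW delta_gt0) n_gt0 phi_gt0 exC.
have -> : #|E|%:R * (phi * (2 * n%:R * delta)) = n%:R^-1.
  rewrite /delta natrM natrM natrX; field.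
  by rewrite !pnatr_eq0 -!lt0n n_gt0 E_gt0 gt_eqF.
rewrite -SE probability_setC // -(fineK (fin_num_measure P S mS)) -EFinB !lee_fin.
lra.
Qed.
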